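(* In the Pathfinder game (started from the position consisting of the root constituent $\delta^{(0)} = \top$), neither player has a winning strategy, i.e. no strategy of either player guarantees a win against every strategy of the opponent.
   Context: $L$ is a first-order language without equality with finitely many predicate symbols and no function or constant symbols. For $d \in \mathbb{N}$, $\Delta^{(d)}$ is the finite set of Hintikka constituents of depth $d$ with no free variables ($\Delta^{(0)} = \{\top\}$, which is consistent); a constituent is consistent iff satisfiable, and every consistent constituent has a consistent depth-$(d+1)$ expansion. $\mathrm{expand}(1,\delta^{(d)})\subseteq\Delta^{(d+1)}$ denotes the expansions of $\delta^{(d)}$. Refinement tree: on $\Delta = \bigcup_d \Delta^{(d)}$ put an edge from each $\delta^{(d)}$ to each member of $\mathrm{expand}(1,\delta^{(d)})$, keeping a constituent lying in several depth-$d$ expansions as child of only one of them (such shared constituents are inconsistent). Pathfinder is a two-player alternating-turn game. Positions are finite sequences $\delta^{(0)}\delta^{(1)}\cdots\delta^{(d)}$ with each $\delta^{(k+1)}$ a child of $\delta^{(k)}$, possibly followed by a terminal symbol $*$. The player to move at a non-terminal position ending in $\delta^{(d)}$ either (select) appends a child $\delta^{(d+1)}$ of $\delta^{(d)}$ and passes the turn, or (challenge) appends $*$, ending the game; after a challenge on $\delta^{(d)}$, the challenging player wins if $\delta^{(d)}$ is inconsistent and the other player wins if $\delta^{(d)}$ is consistent. A play that never ends has no winner. *)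

From mathcomp Require Import all_boot.
Set Implicit Arguments.
Unset Strict Implicit.
Unset Printing Implicit Defensive.

(* The refinement tree of Hintikka constituents, captured through exactly the
   facts the context supplies about it:
   - Delta d : the finite set of closed constituents of depth d;
   - Delta 0 = {top}, and top is consistent;
   - child d x y : y (depth d+1) is a child of x (depth d) in the refinement
     tree, i.e. y is in expand(1,x) and was assigned to x; each node has at
     most one parent (it is a tree);
   - consistent d x : the constituent x is consistent (= satisfiable);
   - every consistent constituent has a consistent child (expansion). *)
Record RefinementTree := {
  Delta : nat -> finType;
  top : Delta 0;
  Delta0_top : forall x : Delta 0, x = top;
  child : forall d, Delta d -> Delta d.+1 -> Prop;
  child_unique_parent :
    forall d (x y : Delta d) (z : Delta d.+1), child x z -> child y z -> x = y;
  consistent : forall d, Delta d -> Prop;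
  top_consistent : consistent top;
  consistent_expand :
    forall d (x : Delta d), consistent x -> exists2 y, child x y & consistent y
}.

Section Game.
Variable T : RefinementTree.

(* Since the refinement tree is a tree, a non-terminal position
   delta^(0) ... delta^(d) is determined by its last entry delta^(d) : Delta d
   (depth = d).  A strategy assigns to each such position a move:
   [None] = challenge (append the terminal symbol), [Some y] = select the child y. *)
Definition strategy := forall d, Delta T d -> option (Delta T d.+1).

Definition legal (s : strategy) : Prop :=
  forall d (x : Delta T d) y, s d x = Some y -> child x y.

(* Players: [false] moves first (at the root, depth 0), [true] second;
   the player to move at depth d is [odd d]. *)
Definition mover (s0 s1 : strategy) : strategy :=
  fun d => if odd d then s1 d else s0 d.

Fixpoint run (s0 s1 : strategy) (d : nat) : option (Delta T d) :=
  match d return option (Delta T d) with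
  | 0 => Some (top T)
  | d'.+1 => match run s0 s1 d' with
             | Some x => mover s0 s1 x
             | None => None
             end
  end.

(* Player p wins the play of s0 (first player) against s1 (second player):
   at some reached position ending in x (depth d) the player to move
   (odd d) challenges; the challenger wins iff x is inconsistent, the other
   player wins iff x is consistent. Plays that never end have no winner. *)
Definition wins (s0 s1 : strategy) (p : bool) : Prop :=
  exists d (x : Delta T d),
    [/\ run s0 s1 d = Some x, mover s0 s1 x = None,
        (consistent x -> p = ~~ odd d) & (~ consistent x -> p = odd d)].

Definition winning_strategy (p : bool) (s : strategy) : Prop :=
  legal s /\
  forall t : strategy, legal t ->
    wins (if p then t else s) (if p then s else t) p.

End Game.

(* The opponent of a would-be winner can play truthfully: select a consistent
   child of a consistent constituent (one exists) and challenge an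
   inconsistent one.  Then every position the other player faces is
   consistent, so a challenge by the other player loses, while a challenge by
   the truthful player wins; hence against a truthful player only the truthful
   player can win. *)
From mathcomp Require Import all_boot.
From Stdlib Require Import ClassicalEpsilon.

Set Implicit Arguments.
Unset Strict Implicit.
Unset Printing Implicit Defensive.

Section Truthful.
Variable T : RefinementTree.

Definition truthful (s : strategy T) : Prop :=
  forall d (x : Delta T d),
    match s d x with Some y => consistent y | None => ~ consistent x end.

Lemma exists_legal_truthful : exists t : strategy T, legal t /\ truthful t.
Proof.
have move_ok d (x : Delta T d) : exists o : option (Delta T d.+1),
    (forall y, o = Some y -> child x y) /\
    match o with Some y => consistent y | None => ~ consistent x end.
  have [cx | ncx] := classic (consistent x); last by exists None.
  by have [y xy cy] := consistent_expand cx; exists (Some y); split => // _ [<-].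
pose t d x := proj1_sig (constructive_indefinite_description _ (move_ok d x)).
exists t; split => d x; rewrite /t;
  by case: constructive_indefinite_description => o [].
Qed.

Variables (s0 s1 : strategy T) (q : bool).
Hypothesis truthful_q : truthful (if q then s1 else s0).

Lemma moverE d (x : Delta T d) : mover s0 s1 x = (if odd d then s1 else s0) d x.
Proof. by rewrite /mover; case: odd. Qed.

Lemma run_consistent d (x : Delta T d) :
  run s0 s1 d = Some x -> odd d = ~~ q -> consistent x.
Proof.
case: d x => [|d] x /=; first by move=> [<-] _; apply: top_consistent.
case: (run s0 s1 d) => [w|] //; rewrite moverE => wx /negb_inj oddq.
by have := truthful_q w; rewrite -oddq wx.
Qed.

Lemma wins_truthful p : wins s0 s1 p -> p = q.
Proof.
move=> [d [x [rx mx win_c win_nc]]].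
have [oddq | oddNq] : odd d = q \/ odd d = ~~ q by case: (odd d); case: q; auto.
  by have := truthful_q x; rewrite -oddq -moverE mx => /win_nc.
by rewrite (win_c (run_consistent rx oddNq)) oddNq negbK.
Qed.

End Truthful.

Theorem mainTheorem11 (T : RefinementTree) (p : bool) :
  ~ exists s : strategy T, winning_strategy p s.
Proof.
move=> [s [_ s_wins]].
have [t [legal_t truthful_t]] := exists_legal_truthful T.
have truthful_Np : truthful (if ~~ p then (if p then s else t) else (if p then t else s)).
  by case: {s_wins} p.
have p_eq_Np := wins_truthful truthful_Np (s_wins t legal_t).
by case: {s_wins truthful_Np} p p_eq_Np.
Qed.
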